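(* Let $F_n$ be a probability distribution function on $\mathbb{R}$ satisfying $F_n(x+t)-F_n(x)\le Mt$ for all $x\ge0$, $t>0$, for some constant $M<\infty$. Let $y_n^*\ge0$, and define $q_n=F_n(y_n^* )-F_n(0)$ and $L_n=\int_0^{y_n^*}x(y_n^*-x)\,dF_n(x)$. Then $$L_n\ge\frac{q_n^3}{27M^2}.$$ *)

From HB Require Import structures.
From mathcomp Require Import all_boot all_order all_algebra.
From mathcomp Require Import all_classical all_reals all_analysis.
Set Implicit Arguments. Unset Strict Implicit. Unset Printing Implicit Defensive.
Import Order.TTheory GRing.Theory Num.Theory.
Import numFieldNormedType.Exports.
Local Open Scope classical_set_scope.
Local Open Scope ring_scope.

(* A probability distribution function on R: nondecreasing, right-continuous,
   with limits 0 at -oo and 1 at +oo (mathcomp-analysis cumulativeBounded 0 1).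
   dF is the associated Lebesgue-Stieltjes measure. *)
Definition L_n {R : realType} (F : cumulativeBounded (0:R) (1:R)) (y : R) : \bar R :=
  (\int[lebesgue_stieltjes_measure F]_(x in `[0%R, y]%classic) (x * (y - x))%:E)%E.

(** Put [q = F y - F 0] and [d = q / (3 M)]. On [(d, y - d]] the integrand
    [x (y - x)] is at least [d ^ 2], and since [F] gains at most [M d] on each
    of [(0, d]] and [(y - d, y]], that interval still carries mass at least
    [q - 2 M d = q / 3]. Hence [L_n F y >= d ^ 2 q / 3 = q ^ 3 / (27 M ^ 2)]. *)

From HB Require Import structures.
From mathcomp Require Import all_boot all_order all_algebra.
From mathcomp Require Import all_classical all_reals all_analysis.
From mathcomp Require Import measurable_realfun ring lra.
Import Order.TTheory GRing.Theory Num.Theory.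
Import numFieldNormedType.Exports.
Local Open Scope classical_set_scope.
Local Open Scope ring_scope.

Lemma cst_mul_measure_le_integral d (T : measurableType d) (R : realType)
    (mu : {measure set T -> \bar R}) (A D : set T) (f : T -> \bar R) (c : R) :
  measurable A -> measurable D -> A `<=` D -> measurable_fun D f ->
  (forall x, D x -> (0 <= f x)%E) -> 0 <= c -> (forall x, A x -> (c%:E <= f x)%E) ->
  (c%:E * mu A <= \int[mu]_(x in D) f x)%E.
Proof.
move=> mA mD AD mf f0 c0 cf; rewrite -integral_cst//.
apply: (@le_trans _ _ (\int[mu]_(x in A) f x)%E).
  by apply: ge0_le_integral => //; exact: measurable_funS mf.
exact: ge0_subset_integral.
Qed.

Lemma lebesgue_stieltjes_measure_itv_oc (R : realType) (F : cumulative R R) (a b : R) :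
  a <= b -> lebesgue_stieltjes_measure F `]a, b] = (F b - F a)%:E.
Proof.
move=> ab; rewrite /lebesgue_stieltjes_measure /measure_extension.
by rewrite measurable_mu_extE/= ?wlength_itv_bnd//; exact: is_ocitv.
Qed.

Section L_n_lower_bound.
Variables (R : realType) (F : cumulativeBounded (0 : R) (1 : R)) (M y : R).
Hypothesis HM : forall x t : R, 0 <= x -> 0 < t -> F (x + t) - F x <= M * t.

Lemma L_n_ge0 : (0 <= L_n F y)%E.
Proof.
apply: integral_ge0 => x /=; rewrite in_itv/= => /andP[x0 xy].
by rewrite lee_fin mulr_ge0// subr_ge0.
Qed.

Lemma cumulative_inner_increment_ge (d : R) : 0 < d -> d <= y - d ->
  F y - F 0 - 2 * M * d <= F (y - d) - F d.
Proof.
move=> d0 dyd.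
have := HM 0 d (lexx 0) d0; have := HM (y - d) d _ d0; rewrite add0r subrK.
lra.
Qed.

Lemma L_n_ge_strip (d : R) : 0 < d -> d <= y - d ->
  ((d ^+ 2 * (F y - F 0 - 2 * M * d))%:E <= L_n F y)%E.
Proof.
move=> d0 dyd; rewrite EFinM.
apply: (@le_trans _ _ ((d ^+ 2)%:E * lebesgue_stieltjes_measure F `]d, (y - d)%R])%E).
  rewrite lebesgue_stieltjes_measure_itv_oc// lee_pmul2l ?lte_fin ?exprn_gt0//.
  by rewrite lee_fin cumulative_inner_increment_ge.
apply: cst_mul_measure_le_integral => //=.
- by move=> x /=; rewrite !in_itv/= => /andP[? ?]; apply/andP; split; lra.
- apply/measurable_EFinP; apply: measurable_funM => //; exact: measurable_funB.
- by move=> x; rewrite in_itv/= => /andP[x0 xy]; rewrite lee_fin mulr_ge0// subr_ge0.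
- exact: sqr_ge0.
- by move=> x; rewrite in_itv/= => /andP[? ?]; rewrite lee_fin expr2; nra.
Qed.

End L_n_lower_bound.

Theorem lemma9 (R : realType) (F : cumulativeBounded (0:R) (1:R)) (M : R)
  (HM : forall x t : R, 0 <= x -> 0 < t -> F (x + t) - F x <= M * t)
  (y : R) (hy : 0 <= y) :
  let q := F y - F 0 in
  ((q ^+ 3 / (27 * M ^+ 2))%:E <= L_n F y)%E.
Proof.
cbv zeta; set q := F y - F 0.
have q0 : 0 <= q by rewrite subr_ge0 (cumulative_is_nondecreasing F).
have [->|qneq0] := eqVneq q 0; first by rewrite expr0n mul0r L_n_ge0.
have {q0 qneq0} qpos : 0 < q by rewrite lt_def qneq0.
have ypos : 0 < y.
  by rewrite lt_def hy andbT; apply: contraTneq qpos => y0; rewrite /q y0 subrr ltxx.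
have qMy : q <= M * y by have := HM 0 y (lexx 0) ypos; rewrite add0r.
have Mpos : 0 < M by nra.
pose d := q / (3 * M).
have qd : q = M * (3 * d) by rewrite /d; field; rewrite gt_eqF.
have dpos : 0 < d by rewrite divr_gt0// mulr_gt0.
clearbody d.
have -> : q ^+ 3 / (27 * M ^+ 2) = d ^+ 2 * (q - 2 * M * d).
  by rewrite qd; field; rewrite gt_eqF.
have y3d : 3 * d <= y by rewrite -(ler_pM2l Mpos) -qd.
by apply: L_n_ge_strip => //; lra.
Qed.
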